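(* Let $(g(x))_{x\ge0}$ be a semigroup acting on a real finite-dimensional vector space $V$, let $V=\bigoplus_{i=1}^nV_i$ be an SRPD, and let $V_i$ be a component of first type with eigenvalue $\lambda(x)$. Then there exists a nonzero $v\in V_i$ such that $g(x)v=\lambda(x)v$ for all $x>0$.
   Context: A semigroup is a map $g:[0,\infty)\to L(V)$ with $g(0)=\mathrm{id}$ and $g(x+y)=g(x)g(y)$ for all $x,y\ge0$. A simultaneous real primary decomposition (SRPD) is a decomposition $V=\bigoplus_{i=1}^nV_i$ into nonzero subspaces, each $g(x)$-invariant for all $x\ge0$, such that each $V_i$ is either of first type: for every $x\ge0$, $g(x)|_{V_i}$ has exactly one (complex) eigenvalue $\lambda(x)$, which is real and $\ge0$; or of second type: for every $x\ge 0$ the eigenvalues of $g(x)|_{V_i}$ lie in $\{\lambda(x),\overline{\lambda(x)}\}$ for some $\lambda(x)\in\mathbb C$, with $\lambda(x)\notin\mathbb R$ for some $x$. *)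

From HB Require Import structures.
From mathcomp Require Import all_boot all_order all_algebra.
From mathcomp Require Import reals.
From mathcomp Require Import complex.
Set Implicit Arguments. Unset Strict Implicit. Unset Printing Implicit Defensive.
Import Order.TTheory GRing.Theory Num.Theory.
Local Open Scope ring_scope.
Local Open Scope complex_scope.

(* Real vector space V = 'rV[R]_n (row vectors), linear maps = 'M[R]_n acting
   on the right: v |-> v *m A. Subspaces of V are represented by matrices
   (their row space), as in mxalgebra. *)

Definition cplx_mx (R : realType) (m p : nat) (A : 'M[R]_(m, p)) : 'M[R[i]]_(m, p) :=
  map_mx (fun r : R => r%:C) A.

(* z is a (complex) eigenvalue of the restriction of A to the A-invariant
   subspace W: there is a nonzero vector of the complexification of W
   that is an eigenvector of (the complexification of) A for z. *)
Definition eigenvalue_restr (R : realType) (n : nat) (A : 'M[R]_n) (m : nat)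
  (W : 'M[R]_(m, n)) (z : R[i]) : Prop :=
  exists2 v : 'rV[R[i]]_n, v != 0 &
    (v <= cplx_mx W)%MS /\ v *m cplx_mx A = z *: v.

(* Semigroup g : [0, oo) -> L(V). Values of g at negative arguments are irrelevant. *)
Definition is_semigroup (R : realType) (n : nat) (g : R -> 'M[R]_n) : Prop :=
  g 0 = 1%:M /\ forall x y, 0 <= x -> 0 <= y -> g (x + y) = g x *m g y.

Definition g_invariant (R : realType) (n : nat) (g : R -> 'M[R]_n) (m : nat)
  (W : 'M[R]_(m, n)) : Prop :=
  forall x, 0 <= x -> stablemx W (g x).

Definition first_type_with (R : realType) (n : nat) (g : R -> 'M[R]_n) (m : nat)
  (W : 'M[R]_(m, n)) (lam : R -> R) : Prop :=
  forall x, 0 <= x -> 0 <= lam x /\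
    (forall z, eigenvalue_restr (g x) W z <-> z = (lam x)%:C).

Definition first_type (R : realType) (n : nat) (g : R -> 'M[R]_n) (m : nat)
  (W : 'M[R]_(m, n)) : Prop :=
  exists lam : R -> R, first_type_with g W lam.

Definition second_type (R : realType) (n : nat) (g : R -> 'M[R]_n) (m : nat)
  (W : 'M[R]_(m, n)) : Prop :=
  exists lam : R -> R[i],
    (forall x, 0 <= x -> forall z, eigenvalue_restr (g x) W z ->
        z = lam x \/ z = conjc (lam x)) /\
    (exists x, 0 <= x /\ Im (lam x) != 0).

Definition SRPD (R : realType) (n : nat) (g : R -> 'M[R]_n) (k : nat)
  (Vs : 'I_k -> 'M[R]_n) : Prop :=
  (forall i, Vs i != 0) /\
  mxdirect (\sum_(i < k) Vs i) /\
  ((\sum_(i < k) Vs i) :=: 1%:M)%MS /\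
  (forall i, g_invariant g (Vs i)) /\
  (forall i, first_type g (Vs i) \/ second_type g (Vs i)).

From HB Require Import structures.
From mathcomp Require Import all_boot all_order all_algebra.
From mathcomp Require Import reals complex spectral.
From Stdlib Require Import Classical.
Set Implicit Arguments. Unset Strict Implicit. Unset Printing Implicit Defensive.
Import Order.TTheory GRing.Theory Num.Theory.
Local Open Scope ring_scope.
Local Open Scope complex_scope.

(* Over an algebraically closed field a nonzero
      subspace U stable under a matrix A contains an eigenvector of A.
   2. Real eigenvectors.  If U <= W is stable under a real matrix A and the
      only complex eigenvalue of A on W is the real number l, then the real
      or the imaginary part of a complex eigenvector in U is a nonzero real
      eigenvector for l in U.
   3. Common eigenvectors.  A commuting family (A t) such that every nonzero
      A t-stable subspace of W meets the eigenspace of A t for lam t has a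
      common eigenvector in every nonzero subspace U <= W stable under the
      whole family: by induction on the rank of U, either U lies in all the
      eigenspaces, or it is cut down by one of them to a smaller stable
      subspace (stability uses commutativity).
   The theorem applies 3 to the family g(x), x > 0, which commutes by the
   semigroup law, with the hypothesis of 3 supplied by 2. *)

(* Part 1: a nonzero subspace stable under A, over an algebraically closed field,
   contains an eigenvector of A: take an eigenvector of the restriction of A
   to U and transport it back to U. *)
Lemma stable_subspace_eigenvector (C : numClosedFieldType) (n : nat)
    (A U : 'M[C]_n) :
  U != 0 -> stablemx U A ->
  exists a, exists2 v : 'rV[C]_n, v != 0 &
    (v <= U)%MS && (v <= eigenspace A a)%MS.
Proof.
move=> Unz sUA; have rU_gt0 : (0 < \rank U)%N by rewrite lt0n mxrank_eq0.
have [a /eigenvalueP [w wA wnz]] := eigenvalue_closed (restrictmx U A) rU_gt0.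
exists a, (w *m row_base U); first by rewrite mulmx_free_eq0 ?row_base_free.
rewrite (submx_trans (submxMl _ _)) ?eq_row_base //=.
rewrite -sub_eigenspace_conjmx ?row_base_free ?stablemx_row_base //.
by apply/eigenspaceP.
Qed.

Lemma stablemx_cap (F : fieldType) (n : nat) (U V f : 'M[F]_n) :
  stablemx U f -> stablemx V f -> stablemx (U :&: V)%MS f.
Proof.
move=> sUf sVf; rewrite sub_capmx.
by rewrite (submx_trans _ sUf) ?(submx_trans _ sVf) ?submxMr ?capmxSl ?capmxSr.
Qed.

Section RealParts.
Variable R : realType.

Lemma cplx_mxE (m p : nat) (M : 'M[R]_(m, p)) :
  cplx_mx M = map_mx (real_complex R) M.
Proof. by []. Qed.

(* Taking real or imaginary parts is an R-linear map f : R[i] -> R; such a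
   map commutes with multiplication by real matrices and real scalars. *)
Variable f : R[i] -> R.
Hypothesis f_add : forall z w, f (z + w) = f z + f w.
Hypothesis f_real_mul : forall (r : R) z, f (r%:C * z) = r * f z.

Lemma f_zero : f 0 = 0.
Proof. by rewrite -(mul0r (f 0)) -f_real_mul mulr0. Qed.

Lemma map_mx_real_mulmx (m p q : nat) (w : 'M[R[i]]_(m, p)) (M : 'M[R]_(p, q)) :
  map_mx f (w *m cplx_mx M) = map_mx f w *m M.
Proof.
apply/matrixP => a b; rewrite !mxE.
elim/big_rec2: _ => [|j x y _ <-]; first exact: f_zero.
by rewrite f_add !mxE mulrC f_real_mul mulrC.
Qed.

Lemma map_mx_real_scale (m p : nat) (c : R) (w : 'M[R[i]]_(m, p)) :
  map_mx f (c%:C *: w) = c *: map_mx f w.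
Proof. by apply/matrixP => a b; rewrite !mxE f_real_mul. Qed.

Lemma map_mx_real_eigenvector (n : nat) (A U : 'M[R]_n) (l : R)
    (v : 'rV[R[i]]_n) :
  (v <= cplx_mx U)%MS -> (v <= eigenspace (cplx_mx A) l%:C)%MS ->
  (map_mx f v <= U :&: eigenspace A l)%MS.
Proof.
move=> /submxP [D ->] /eigenspaceP vA; rewrite sub_capmx.
rewrite map_mx_real_mulmx submxMl /=; apply/eigenspaceP.
by rewrite -!map_mx_real_mulmx vA map_mx_real_scale.
Qed.

End RealParts.

Lemma Re_add (R : realType) (z w : R[i]) :
  complex.Re (z + w) = complex.Re z + complex.Re w.
Proof. by case: z w => [a b] [c d]. Qed.

Lemma Re_real_mul (R : realType) (r : R) (z : R[i]) :
  complex.Re (r%:C * z) = r * complex.Re z.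
Proof. by case: z => a b /=; rewrite mul0r subr0. Qed.

Lemma Im_add (R : realType) (z w : R[i]) :
  complex.Im (z + w) = complex.Im z + complex.Im w.
Proof. by case: z w => [a b] [c d]. Qed.

Lemma Im_real_mul (R : realType) (r : R) (z : R[i]) :
  complex.Im (r%:C * z) = r * complex.Im z.
Proof. by case: z => a b /=; rewrite mul0r addr0. Qed.

Lemma real_eigenspace_meets (R : realType) (n : nat) (A : 'M[R]_n) (m : nat)
    (W : 'M[R]_(m, n)) (U : 'M[R]_n) (l : R) :
  U != 0 -> stablemx U A -> (U <= W)%MS ->
  (forall z, eigenvalue_restr A W z -> z = l%:C) ->
  (U :&: eigenspace A l)%MS != 0.
Proof.
move=> Unz sUA UW only_l.
have cUnz : cplx_mx U != 0 by rewrite cplx_mxE map_mx_eq0.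
have csUA : stablemx (cplx_mx U) (cplx_mx A).
  by rewrite !cplx_mxE -map_mxM map_submx.
have [z [v vnz /andP [vU vz]]] := stable_subspace_eigenvector cUnz csUA.
have zl : z = l%:C.
  apply: only_l; exists v => //; split; last exact/eigenspaceP.
  by apply: submx_trans vU _; rewrite !cplx_mxE map_submx.
rewrite {}zl in vz.
have nz_part (f : R[i] -> R) : map_mx f v != 0 ->
    (forall z w, f (z + w) = f z + f w) ->
    (forall (r : R) z, f (r%:C * z) = r * f z) ->
    (U :&: eigenspace A l)%MS != 0.
  move=> fvnz fD fM; apply: contraNneq fvnz => cap0.
  by rewrite -submx0 -cap0 map_mx_real_eigenvector.
have [reZ|] := eqVneq (map_mx (@complex.Re R) v) 0; last first.
  by move/nz_part; apply; [exact: Re_add | exact: Re_real_mul].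
have [imZ|] := eqVneq (map_mx (@complex.Im R) v) 0; last first.
  by move/nz_part; apply; [exact: Im_add | exact: Im_real_mul].
case/eqP: vnz; apply/matrixP => a b.
move/matrixP: reZ => /(_ a b); move/matrixP: imZ => /(_ a b).
by rewrite !mxE; case: (v a b) => x y /= -> ->.
Qed.

Section CommonEigenvector.
Variables (F : fieldType) (n : nat) (T : Type) (P : T -> Prop).
Variables (A : T -> 'M[F]_n) (lam : T -> F) (W : 'M[F]_n).
Hypothesis A_comm : forall s t, P s -> P t -> comm_mx (A s) (A t).
Hypothesis A_eigen : forall t (U : 'M[F]_n), P t -> U != 0 -> (U <= W)%MS ->
  stablemx U (A t) -> (U :&: eigenspace (A t) (lam t))%MS != 0.

(* Cutting a family-stable subspace by an eigenspace of a member keeps it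
   stable under the family, since the family commutes. *)
Lemma cap_eigenspace_stable t (U : 'M[F]_n) : P t ->
  (forall s, P s -> stablemx U (A s)) ->
  forall s, P s -> stablemx (U :&: eigenspace (A t) (lam t))%MS (A s).
Proof.
move=> Pt sU s Ps; apply: stablemx_cap; first exact: sU.
exact/comm_mx_stable_eigenspace/A_comm.
Qed.

Lemma common_eigenvector_in (U : 'M[F]_n) :
  U != 0 -> (U <= W)%MS -> (forall t, P t -> stablemx U (A t)) ->
  exists2 v : 'rV[F]_n, v != 0 &
    (v <= U)%MS /\ forall t, P t -> (v <= eigenspace (A t) (lam t))%MS.
Proof.
have [r] := ubnP (\rank U); elim: r U => // r IH U rU Unz UW sU.
have [all_eigen|] := classic (forall t, P t -> (U <= eigenspace (A t) (lam t))%MS).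
  exists (nz_row U); first by rewrite nz_row_eq0.
  by split=> [|t Pt]; rewrite (submx_trans (nz_row_sub U)) ?all_eigen.
move=> /not_all_ex_not [t /(imply_to_and (P t)) [Pt Unot]].
pose U' := (U :&: eigenspace (A t) (lam t))%MS.
have U'U : (U' <= U)%MS by exact: capmxSl.
have rU' : (\rank U' < r)%N.
  have U'_lt_U : (U' < U)%MS.
    rewrite ltmxE U'U /=; apply/negP => UU'; apply: Unot.
    by rewrite (submx_trans UU') ?capmxSr.
  by rewrite -ltnS (leq_trans _ rU) // ltnS rank_ltmx.
have [v vnz [vU' v_eigen]] := IH U' rU' (A_eigen Pt Unz UW (sU t Pt))
  (submx_trans U'U UW) (cap_eigenspace_stable Pt sU).
by exists v => //; split=> //; exact: submx_trans U'U.
Qed.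

End CommonEigenvector.

Lemma semigroup_comm (R : realType) (n : nat) (g : R -> 'M[R]_n) :
  is_semigroup g -> forall x y, 0 <= x -> 0 <= y -> comm_mx (g x) (g y).
Proof. by move=> [_ gD] x y x0 y0; rewrite /comm_mx -!gD // addrC. Qed.

Theorem mainTheorem3 (R : realType) (n : nat) (g : R -> 'M[R]_n)
  (k : nat) (Vs : 'I_k -> 'M[R]_n) (i : 'I_k) (lam : R -> R) :
  is_semigroup g -> SRPD g Vs -> first_type_with g (Vs i) lam ->
  exists2 v : 'rV[R]_n, v != 0 &
    (v <= Vs i)%MS /\ (forall x, 0 < x -> v *m g x = lam x *: v).
Proof.
move=> sg [Vs_nz [_ [_ [Vs_inv _]]]] ft.
have g_comm x y : 0 < x -> 0 < y -> comm_mx (g x) (g y).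
  by move=> x0 y0; apply: semigroup_comm; rewrite ?ltW.
have g_eigen x (U : 'M[R]_n) : 0 < x -> U != 0 -> (U <= Vs i)%MS -> stablemx U (g x) ->
    (U :&: eigenspace (g x) (lam x))%MS != 0.
  move=> x0 Unz UV sU; apply: (real_eigenspace_meets Unz sU UV) => z.
  by case: (ft x (ltW x0)) => _ /(_ z) [].
have [v vnz [vV v_eigen]] := common_eigenvector_in g_comm g_eigen (Vs_nz i)
  (submx_refl _) (fun x x0 => Vs_inv i x (ltW x0)).
by exists v => //; split=> // x x0; apply/eigenspaceP/v_eigen.
Qed.
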